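(* Assume (F1)–(F3), let $\tau\ge0$ and $c\le0$. Let $w_*\in(0,1)$ be such that $f(w_* )=1$ and $f(w)>1$ for $0\le w<w_*$, and suppose $f'(w)<0$ for $w_*\le w\le w_0$. If $w$ is a solution of problem (P) with these $\tau,c$ such that $w'(x)\le0$ for all $x\in\mathbb R$, then $w'(x)<0$ for all $x\in\mathbb R$.
   Context: $f:\mathbb R\to\mathbb R$ is $C^4$ with bounded derivatives and satisfies: (F1) $f(w)>0$ for $0\le w<1$, $f(1)=0$, $f'(1)>-1$; (F2) $f(0)>1$, $f'(0)>0$, and $f(w)>1$ for $0\le w<w_*$ for some $w_*\in(0,1)$; (F3) the equation $f(w)=1-w$ has exactly one solution $w_0$ in $(0,1)$, and $f'(w_0)<-1$; hence $f(w)>1-w$ for $0\le w<w_0$ and $f(w)<1-w$ for $w_0<w<1$. Problem (P) for given $\tau\ge0$, $c\in\mathbb R$: find $w\in C^2(\mathbb R)$ with $w''(x)+cw'(x)+w(x)\big(1-w(x)-f(w(x+c\tau))\big)=0$ for all $x$, and $w(-\infty)=1$, $w(+\infty)=0$. *)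

From Stdlib Require Import Reals Lra.
Open Scope R_scope.

Definition C4_bounded_derivs (f f1 f2 f3 f4 : R -> R) : Prop :=
  (forall x, derivable_pt_lim f x (f1 x)) /\
  (forall x, derivable_pt_lim f1 x (f2 x)) /\
  (forall x, derivable_pt_lim f2 x (f3 x)) /\
  (forall x, derivable_pt_lim f3 x (f4 x)) /\
  continuity f4 /\
  (exists M, forall x,
      Rabs (f1 x) <= M /\ Rabs (f2 x) <= M /\ Rabs (f3 x) <= M /\ Rabs (f4 x) <= M).

Definition F1 (f f1 : R -> R) : Prop :=
  (forall w, 0 <= w < 1 -> f w > 0) /\ f 1 = 0 /\ f1 1 > -1.

Definition F2 (f f1 : R -> R) : Prop :=
  f 0 > 1 /\ f1 0 > 0 /\
  exists ws, 0 < ws < 1 /\ forall w, 0 <= w < ws -> f w > 1.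

Definition F3_root (f f1 : R -> R) (w0 : R) : Prop :=
  0 < w0 < 1 /\ f w0 = 1 - w0 /\
  (forall w, 0 < w < 1 -> f w = 1 - w -> w = w0) /\
  f1 w0 < -1.

Definition lim_minus_infty (u : R -> R) (l : R) : Prop :=
  forall eps, eps > 0 -> exists A, forall x, x < A -> Rabs (u x - l) < eps.

Definition lim_plus_infty (u : R -> R) (l : R) : Prop :=
  forall eps, eps > 0 -> exists A, forall x, x > A -> Rabs (u x - l) < eps.

Definition solves_P (f : R -> R) (tau c : R) (w w1 w2 : R -> R) : Prop :=
  (forall x, derivable_pt_lim w x (w1 x)) /\
  (forall x, derivable_pt_lim w1 x (w2 x)) /\
  continuity w2 /\
  (forall x, w2 x + c * w1 x + w x * (1 - w x - f (w (x + c * tau))) = 0) /\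
  lim_minus_infty w 1 /\ lim_plus_infty w 0.

From Stdlib Require Import Reals Lra.
Open Scope R_scope.

(* Suppose w'(x0) = 0. As w' <= 0, x0 maximizes w', so w''(x0) = 0 and the equation leaves three
   options: w(x0) = 0, w(x0) = 1, or f(w(x0 + c tau)) = 1 - w(x0). In the first two, and in the
   third when c tau = 0 (then w(x0) = w0), the reaction term is Lipschitz-small near the value
   w(x0), so uniqueness for the second-order equation makes w constant, against its limits.
   If c tau < 0, the delayed value v = w(x0 + c tau) lies in [ws, w0], where f' < 0. Then
   w'(x0 + c tau) = 0 too, for otherwise w'''(x0) = w(x0) f'(v) w'(x0 + c tau) > 0 and w' would
   become positive after x0. Iterating, w <= w0 along x0 + n c tau -> -oo, against w(-oo) = 1. *)

Lemma pos_derivative_locally_increasing (g : R -> R) (x l : R) :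
  derivable_pt_lim g x l -> 0 < l ->
  exists d, 0 < d /\ forall h, 0 < h < d -> g x < g (x + h) /\ g (x - h) < g x.
Proof.
  intros Hg Hl. destruct (Hg l Hl) as [d Hd].
  exists d. split; [apply cond_pos|]. intros h Hh.
  assert (Hr : Rabs ((g (x + h) - g x) / h - l) < l) by (apply Hd; [lra| rewrite Rabs_right; lra]).
  assert (Hl' : Rabs ((g (x + - h) - g x) / - h - l) < l) by (apply Hd; [lra| rewrite Rabs_left; lra]).
  apply Rabs_def2 in Hr as [_ Hr]. apply Rabs_def2 in Hl' as [_ Hl'].
  replace (x + - h) with (x - h) in Hl' by ring.
  assert (g (x + h) - g x = (g (x + h) - g x) / h * h) by (field; lra).
  assert (g (x - h) - g x = (g (x - h) - g x) / - h * - h) by (field; lra).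
  split; nra.
Qed.

Lemma strict_min_of_pos_second_derivative (g g' : R -> R) (y D : R) :
  (forall x, derivable_pt_lim g x (g' x)) -> derivable_pt_lim g' y D ->
  g' y = 0 -> 0 < D -> exists h, 0 < h /\ g y < g (y + h).
Proof.
  intros Hg Hg' Hy HD.
  destruct (pos_derivative_locally_increasing g' y D Hg' HD) as [d [Hd Hinc]].
  exists (d / 2). split; [lra|].
  destruct (MVT_cor2 g g' y (y + d / 2)) as [t [Ht Hty]]; [lra | intros; apply Hg |].
  destruct (Hinc (t - y)) as [Hpos _]; [lra|].
  replace (y + (t - y)) with t in Hpos by ring. nra.
Qed.

Lemma derivable_pt_lim_mult_exp (E : R -> R) (e k x : R) :
  derivable_pt_lim E x e ->
  derivable_pt_lim (fun y => E y * exp (k * y)) x ((e + k * E x) * exp (k * x)).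
Proof.
  intro HE.
  replace ((e + k * E x) * exp (k * x)) with (e * exp (k * x) + E x * (exp (k * x) * k)) by ring.
  apply (derivable_pt_lim_mult E (fun y => exp (k * y))); [exact HE|].
  apply (derivable_pt_lim_comp (fun y => k * y) exp); [|apply derivable_pt_lim_exp].
  pose proof (derivable_pt_lim_scal id k x 1 (derivable_pt_lim_id x)) as Hk.
  rewrite Rmult_1_r in Hk. exact Hk.
Qed.

(* Gronwall: [E exp(L y)] is nondecreasing and [E exp(-L y)] nonincreasing. *)
Lemma gronwall_zero (E E' : R -> R) (L a : R) :
  (forall x, derivable_pt_lim E x (E' x)) -> (forall x, 0 <= E x) ->
  (forall x, Rabs (E' x) <= L * E x) -> E a = 0 -> forall x, E x = 0.
Proof.
  intros HE Hpos HL Ha x.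
  assert (Hup : increasing (fun y => E y * exp (L * y))).
  { apply (nonneg_derivative_1 _ (fun y => exist _ _ (derivable_pt_lim_mult_exp E _ L y (HE y)))).
    intro y. simpl. pose proof (exp_pos (L * y)). pose proof (Rle_abs (- E' y)) as Hm.
    rewrite Rabs_Ropp in Hm. specialize (HL y). nra. }
  assert (Hdown : decreasing (fun y => E y * exp (- L * y))).
  { apply (nonpos_derivative_1 _ (fun y => exist _ _ (derivable_pt_lim_mult_exp E _ (- L) y (HE y)))).
    intro y. simpl. pose proof (exp_pos (- L * y)). pose proof (Rle_abs (E' y)).
    specialize (HL y). nra. }
  pose proof (Hpos x). pose proof (exp_pos (L * x)). pose proof (exp_pos (- L * x)).
  destruct (Rle_or_lt x a) as [Hxa|Hax].
  - specialize (Hup x a Hxa). simpl in Hup. rewrite Ha in Hup. nra.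
  - specialize (Hdown a x (Rlt_le _ _ Hax)). simpl in Hdown. rewrite Ha in Hdown. nra.
Qed.

Lemma energy_bound (p q r K : R) : 0 <= K -> Rabs r <= K * (Rabs p + Rabs q) ->
  Rabs (2 * (p * q + q * r)) <= (1 + 3 * K) * (p * p + q * q).
Proof.
  intros HK Hr.
  pose proof (Rsqr_abs p) as Hp. pose proof (Rsqr_abs q) as Hq. unfold Rsqr in Hp, Hq.
  rewrite Hp, Hq, Rabs_mult, (Rabs_right 2) by lra.
  pose proof (Rabs_triang (p * q) (q * r)) as Ht. rewrite !Rabs_mult in Ht.
  pose proof (Rabs_pos p). pose proof (Rabs_pos q). pose proof (Rabs_pos r).
  pose proof (pow2_ge_0 (Rabs p - Rabs q)).
  assert (Rabs q * Rabs r <= Rabs q * (K * (Rabs p + Rabs q))) by (apply Rmult_le_compat_l; lra).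
  nra.
Qed.

(* The energy [p^2 + q^2] satisfies the hypotheses of [gronwall_zero]. *)
Lemma second_order_uniqueness (p q r : R -> R) (K a : R) : 0 <= K ->
  (forall x, derivable_pt_lim p x (q x)) -> (forall x, derivable_pt_lim q x (r x)) ->
  (forall x, Rabs (r x) <= K * (Rabs (p x) + Rabs (q x))) ->
  p a = 0 -> q a = 0 -> forall x, p x = 0.
Proof.
  intros HK Hp Hq Hr Pa Qa x.
  assert (HE : forall y, derivable_pt_lim (fun y => p y * p y + q y * q y) y
                            (2 * (p y * q y + q y * r y))).
  { intro y. replace (2 * (p y * q y + q y * r y))
      with (q y * p y + p y * q y + (r y * q y + q y * r y)) by ring.
    apply (derivable_pt_lim_plus (fun y => p y * p y) (fun y => q y * q y));
      apply derivable_pt_lim_mult; auto. }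
  assert (E0 : p x * p x + q x * q x = 0).
  { apply (gronwall_zero (fun y => p y * p y + q y * q y) _ (1 + 3 * K) a HE).
    - intro y. nra.
    - intro y. apply energy_bound; auto.
    - rewrite Pa, Qa. ring. }
  nra.
Qed.

Lemma decreasing_le_lim_minus_infty (u : R -> R) (l : R) :
  decreasing u -> lim_minus_infty u l -> forall x, u x <= l.
Proof.
  intros Hu Hl x. destruct (Rle_or_lt (u x) l) as [|Hgt]; [assumption|].
  destruct (Hl (u x - l)) as [A HA]; [lra|].
  pose proof (Rmin_l x A). pose proof (Rmin_r x A).
  specialize (HA (Rmin x A - 1) ltac:(lra)). apply Rabs_def2 in HA.
  pose proof (Hu (Rmin x A - 1) x ltac:(lra)). lra.
Qed.

Lemma decreasing_ge_lim_plus_infty (u : R -> R) (l : R) :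
  decreasing u -> lim_plus_infty u l -> forall x, l <= u x.
Proof.
  intros Hu Hl x. destruct (Rle_or_lt l (u x)) as [|Hlt]; [assumption|].
  destruct (Hl (l - u x)) as [A HA]; [lra|].
  pose proof (Rmax_l x A). pose proof (Rmax_r x A).
  specialize (HA (Rmax x A + 1) ltac:(lra)). apply Rabs_def2 in HA.
  pose proof (Hu x (Rmax x A + 1) ltac:(lra)). lra.
Qed.

Lemma lim_minus_infty_const (u : R -> R) (k l : R) :
  (forall x, u x = k) -> lim_minus_infty u l -> k = l.
Proof.
  intros Hu Hl. destruct (Req_dec k l) as [|Hne]; [assumption|].
  destruct (Hl (Rabs (k - l))) as [A HA]; [apply Rabs_pos_lt; lra|].
  specialize (HA (A - 1) ltac:(lra)). rewrite Hu in HA. lra.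
Qed.

Lemma lim_plus_infty_const (u : R -> R) (k l : R) :
  (forall x, u x = k) -> lim_plus_infty u l -> k = l.
Proof.
  intros Hu Hl. destruct (Req_dec k l) as [|Hne]; [assumption|].
  destruct (Hl (Rabs (k - l))) as [A HA]; [apply Rabs_pos_lt; lra|].
  specialize (HA (A + 1) ltac:(lra)). rewrite Hu in HA. lra.
Qed.

(* If [v] lay beyond [w0], then [f z + z - 1], positive at [v] and negative just left of [1]
   (its derivative at [1] is [f'(1) + 1 > 0]), would vanish in [(w0, 1)]. *)
Lemma le_root_of_ge_one_minus (f f1 : R -> R) (w0 : R) :
  (forall x, derivable_pt_lim f x (f1 x)) -> f 1 = 0 -> -1 < f1 1 ->
  (forall v, 0 < v < 1 -> f v = 1 - v -> v = w0) ->
  forall v, 0 < v < 1 -> 1 - v <= f v -> v <= w0.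
Proof.
  intros Hf Hf1 Hf1' Hroot v Hv Hfv.
  destruct (Rle_or_lt v w0) as [|Hlt]; [assumption|]. exfalso.
  set (g := fun z => f z + z - 1).
  assert (Hg : forall z, derivable_pt_lim g z (f1 z + 1)).
  { intro z. replace (f1 z + 1) with (f1 z + 1 - 0) by ring.
    apply (derivable_pt_lim_minus (fun z => f z + z) (fct_cte 1));
      [apply (derivable_pt_lim_plus f id); [apply Hf | apply derivable_pt_lim_id]
      | apply derivable_pt_lim_const]. }
  assert (Hgv : 0 < g v).
  { unfold g. destruct (Req_dec (f v) (1 - v)) as [E|]; [|lra].
    apply Hroot in E; lra. }
  destruct (pos_derivative_locally_increasing g 1 _ (Hg 1)) as [d [Hd Hinc]]; [lra|].
  set (h := Rmin (d / 2) ((1 - v) / 2)).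
  assert (0 < h < d /\ h <= (1 - v) / 2) as [Hh Hhv].
  { unfold h. pose proof (Rmin_l (d / 2) ((1 - v) / 2)). pose proof (Rmin_r (d / 2) ((1 - v) / 2)).
    split; [split; [apply Rmin_glb_lt|]|]; lra. }
  destruct (Hinc h Hh) as [_ Hgh]. unfold g at 2 in Hgh. rewrite Hf1 in Hgh.
  destruct (IVT_cor g v (1 - h)) as [z [Hz Hgz]].
  - intro z. apply (derivable_continuous_pt g z (exist _ _ (Hg z))).
  - lra.
  - nra.
  - assert (z = w0) by (apply Hroot; unfold g in Hgz; lra). lra.
Qed.

Section CriticalPoints.

Variables (f f1 : R -> R) (M w0 ws tau c : R) (w w1 w2 : R -> R).

Hypothesis f_deriv : forall x, derivable_pt_lim f x (f1 x).
Hypothesis f1_bounded : forall x, Rabs (f1 x) <= M.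
Hypothesis f_at_1 : f 1 = 0.
Hypothesis f1_at_1 : -1 < f1 1.
Hypothesis w0_unique_root : forall v, 0 < v < 1 -> f v = 1 - v -> v = w0.
Hypothesis w0_range : 0 < w0 < 1.
Hypothesis f_at_w0 : f w0 = 1 - w0.
Hypothesis f_gt_1_below_ws : forall v, 0 <= v < ws -> f v > 1.
Hypothesis f_decreasing_between : forall v, ws <= v <= w0 -> f1 v < 0.

Hypothesis w_deriv : forall x, derivable_pt_lim w x (w1 x).
Hypothesis w1_deriv : forall x, derivable_pt_lim w1 x (w2 x).
Hypothesis w_equation :
  forall x, w2 x + c * w1 x + w x * (1 - w x - f (w (x + c * tau))) = 0.
Hypothesis w_lim_minus : lim_minus_infty w 1.
Hypothesis w_lim_plus : lim_plus_infty w 0.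
Hypothesis w1_nonpos : forall x, w1 x <= 0.
Hypothesis shift_nonpos : c * tau <= 0.

Lemma M_nonneg : 0 <= M.
Proof. pose proof (f1_bounded 0). pose proof (Rabs_pos (f1 0)). lra. Qed.

Lemma f_lipschitz (a b : R) : Rabs (f a - f b) <= M * Rabs (a - b).
Proof.
  destruct (MVT_abs f f1 b a (fun t _ => f_deriv t)) as [t [Ht _]].
  rewrite Ht. apply Rmult_le_compat_r; [apply Rabs_pos | apply f1_bounded].
Qed.

Lemma w_decreasing : decreasing w.
Proof.
  apply (nonpos_derivative_1 w (fun x => exist _ _ (w_deriv x))).
  intro x. apply w1_nonpos.
Qed.

Lemma w_le_1 (x : R) : w x <= 1.
Proof. exact (decreasing_le_lim_minus_infty w 1 w_decreasing w_lim_minus x). Qed.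

Lemma w_ge_0 (x : R) : 0 <= w x.
Proof. exact (decreasing_ge_lim_plus_infty w 0 w_decreasing w_lim_plus x). Qed.

(* A zero of [w1 <= 0] is a maximum of [w1]. *)
Lemma w2_zero_at_critical (y : R) : w1 y = 0 -> w2 y = 0.
Proof.
  intro Hy.
  apply (deriv_maximum w1 (y - 1) (y + 1) y (exist _ _ (w1_deriv y))); try lra.
  intros x _ _. rewrite Hy. apply w1_nonpos.
Qed.

Lemma reaction_zero_at_critical (y : R) :
  w1 y = 0 -> w y * (1 - w y - f (w (y + c * tau))) = 0.
Proof.
  intro Hy. pose proof (w_equation y). rewrite Hy, (w2_zero_at_critical y Hy) in *. lra.
Qed.

Lemma w_const_of_reaction_bound (k K x0 : R) : 0 <= K -> w1 x0 = 0 -> w x0 = k ->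
  (forall x, Rabs (w x * (1 - w x - f (w (x + c * tau)))) <= K * Rabs (w x - k)) ->
  forall x, w x = k.
Proof.
  intros HK Hx0 Hk Hbound x.
  enough (w x - k = 0) by lra.
  apply (second_order_uniqueness (fun y => w y - k) w1 w2 (Rabs c + K) x0);
    [pose proof (Rabs_pos c); lra | | exact w1_deriv | | lra | exact Hx0].
  - intro y. replace (w1 y) with (w1 y - 0) by ring.
    apply (derivable_pt_lim_minus w (fct_cte k)); [apply w_deriv | apply derivable_pt_lim_const].
  - intro y. replace (w2 y) with (- (c * w1 y) - w y * (1 - w y - f (w (y + c * tau))))
      by (pose proof (w_equation y); lra).
    eapply Rle_trans; [apply Rabs_triang|]. rewrite !Rabs_Ropp, Rabs_mult.
    specialize (Hbound y). pose proof (Rabs_pos c). pose proof (Rabs_pos (w1 y)).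
    pose proof (Rabs_pos (w y - k)). nra.
Qed.

Lemma w_ne_0_at_critical (x0 : R) : w1 x0 = 0 -> w x0 <> 0.
Proof.
  intros Hx0 Hw0.
  enough (forall x, w x = 0) by (pose proof (lim_minus_infty_const w 0 1 H w_lim_minus); lra).
  apply (w_const_of_reaction_bound 0 (2 + Rabs (f 0) + M) x0); auto.
  - pose proof (Rabs_pos (f 0)). pose proof M_nonneg. lra.
  - intro x. set (v := w (x + c * tau)).
    assert (Hfv : Rabs (f v) <= Rabs (f 0) + M).
    { pose proof (f_lipschitz v 0) as Hl. pose proof (Rabs_triang_inv (f v) (f 0)).
      rewrite Rminus_0_r, (Rabs_right v) in Hl by (apply Rle_ge, w_ge_0).
      pose proof (w_le_1 (x + c * tau)) as Hv1. fold v in Hv1. pose proof M_nonneg. nra. }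
    assert (Rabs (1 - w x - f v) <= 2 + Rabs (f 0) + M).
    { unfold Rminus. eapply Rle_trans; [apply Rabs_triang|]. rewrite Rabs_Ropp.
      eapply Rle_trans; [apply Rplus_le_compat_r, Rabs_triang|].
      rewrite Rabs_R1, Rabs_Ropp, Rabs_right by (apply Rle_ge, w_ge_0).
      pose proof (w_le_1 x). lra. }
    rewrite Rabs_mult, Rminus_0_r, Rmult_comm.
    apply Rmult_le_compat_r; [apply Rabs_pos | assumption].
Qed.

(* Near [w = 1] the delayed value is even closer to [1], since [w] decreases and the shift is backwards. *)
Lemma w_ne_1_at_critical (x0 : R) : w1 x0 = 0 -> w x0 <> 1.
Proof.
  intros Hx0 Hw1.
  enough (forall x, w x = 1) by (pose proof (lim_plus_infty_const w 1 0 H w_lim_plus); lra).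
  apply (w_const_of_reaction_bound 1 (1 + M) x0); auto.
  - pose proof M_nonneg. lra.
  - intro x. set (v := w (x + c * tau)).
    assert (Hv : w x <= v <= 1).
    { split; [apply w_decreasing; lra | apply w_le_1]. }
    pose proof (f_lipschitz v 1) as Hl. rewrite f_at_1, Rminus_0_r in Hl.
    rewrite (Rabs_left1 (v - 1)) in Hl by lra.
    assert (Hr : Rabs (1 - w x - f v) <= (1 + M) * (1 - w x)).
    { eapply Rle_trans; [apply Rabs_triang|].
      rewrite Rabs_Ropp, (Rabs_right (1 - w x)) by (pose proof (w_le_1 x); lra).
      pose proof M_nonneg. nra. }
    rewrite Rabs_mult, (Rabs_right (w x)), (Rabs_left1 (w x - 1))
      by (pose proof (w_ge_0 x); pose proof (w_le_1 x); lra).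
    pose proof (w_ge_0 x). pose proof (w_le_1 x). pose proof (Rabs_pos (1 - w x - f v)). nra.
Qed.

Lemma delayed_value_bounds (y : R) : w1 y = 0 -> 0 < w y < 1 ->
  w y <= w (y + c * tau) /\ ws <= w (y + c * tau) <= w0.
Proof.
  intros Hy Hwy. set (v := w (y + c * tau)).
  assert (Hfv : f v = 1 - w y).
  { pose proof (reaction_zero_at_critical y Hy) as Hr. fold v in Hr.
    apply Rmult_integral in Hr as [|]; lra. }
  assert (Hwv : w y <= v <= 1) by (split; [apply w_decreasing; lra | apply w_le_1]).
  assert (Hv1 : v < 1).
  { destruct (Req_dec v 1) as [E|]; [rewrite E, f_at_1 in Hfv|]; lra. }
  assert (Hws : ws <= v).
  { destruct (Rle_or_lt ws v) as [|Hlt]; [assumption|].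
    pose proof (f_gt_1_below_ws v ltac:(lra)). lra. }
  repeat split; try lra.
  apply (le_root_of_ge_one_minus f f1 w0); auto; lra.
Qed.

Lemma no_critical_point_without_delay (x0 : R) :
  c * tau = 0 -> w1 x0 = 0 -> 0 < w x0 < 1 -> False.
Proof.
  intros Hct Hx0 Hw.
  assert (Hk : w x0 = w0).
  { apply w0_unique_root; [assumption|].
    pose proof (reaction_zero_at_critical x0 Hx0) as Hr. rewrite Hct, Rplus_0_r in Hr.
    apply Rmult_integral in Hr as [|]; lra. }
  enough (forall x, w x = w0) by (pose proof (lim_plus_infty_const w w0 0 H w_lim_plus); lra).
  apply (w_const_of_reaction_bound w0 (1 + M) x0); auto.
  - pose proof M_nonneg. lra.
  - intro x. rewrite Hct, Rplus_0_r, Rabs_mult.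
    assert (Hr : Rabs (1 - w x - f (w x)) <= (1 + M) * Rabs (w x - w0)).
    { replace (1 - w x - f (w x)) with (- (w x - w0) + (f w0 - f (w x))) by (rewrite f_at_w0; ring).
      eapply Rle_trans; [apply Rabs_triang|]. rewrite Rabs_Ropp.
      pose proof (f_lipschitz w0 (w x)). rewrite (Rabs_minus_sym w0) in H. lra. }
    rewrite (Rabs_right (w x)) by (apply Rle_ge, w_ge_0).
    pose proof (w_ge_0 x). pose proof (w_le_1 x). pose proof (Rabs_pos (1 - w x - f (w x))). nra.
Qed.

Lemma w2_derivative_at_critical (y : R) : w1 y = 0 ->
  derivable_pt_lim w2 y (w y * f1 (w (y + c * tau)) * w1 (y + c * tau)).
Proof.
  intro Hy. set (d := c * tau) in *.
  assert (Hshift : derivable_pt_lim (fun x => w (x + d)) y (w1 (y + d))).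
  { rewrite <- (Rmult_1_r (w1 (y + d))).
    apply (derivable_pt_lim_comp (fun x => x + d) w); [|apply w_deriv].
    rewrite <- (Rplus_0_r 1).
    apply (derivable_pt_lim_plus id (fct_cte d)); [apply derivable_pt_lim_id | apply derivable_pt_lim_const]. }
  assert (Hdelayed : derivable_pt_lim (fun x => f (w (x + d))) y (f1 (w (y + d)) * w1 (y + d))).
  { apply (derivable_pt_lim_comp (fun x => w (x + d)) f); [exact Hshift | apply f_deriv]. }
  assert (Hlogistic : derivable_pt_lim (fun x => 1 - w x - f (w (x + d))) y
                        (0 - w1 y - f1 (w (y + d)) * w1 (y + d))).
  { apply (derivable_pt_lim_minus (fun x => 1 - w x)); [|exact Hdelayed].
    apply (derivable_pt_lim_minus (fct_cte 1)); [apply derivable_pt_lim_const | apply w_deriv]. }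
  assert (Hreaction := derivable_pt_lim_mult w _ y _ _ (w_deriv y) Hlogistic).
  assert (Hdrift := derivable_pt_lim_scal w1 c y _ (w1_deriv y)).
  assert (Hw2 := derivable_pt_lim_opp _ _ _ (derivable_pt_lim_plus _ _ y _ _ Hdrift Hreaction)).
  replace (w y * f1 (w (y + d)) * w1 (y + d)) with
    (- (c * w2 y + (w1 y * (1 - w y - f (w (y + d))) + w y * (0 - w1 y - f1 (w (y + d)) * w1 (y + d)))))
    by (rewrite Hy, (w2_zero_at_critical y Hy); ring).
  refine (derivable_pt_lim_ext _ w2 y _ _ Hw2).
  intro x. pose proof (w_equation x). unfold opp_fct, plus_fct, mult_fct, mult_real_fct. lra.
Qed.

(* Otherwise [w2' = w f'(v) w1(. + c tau) > 0] at the critical point, as [f' < 0] on [ws, w0],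
   and [w1] would become positive just after it. *)
Lemma critical_point_shifts (y : R) : w1 y = 0 -> 0 < w y < 1 -> w1 (y + c * tau) = 0.
Proof.
  intros Hy Hwy. destruct (Req_dec (w1 (y + c * tau)) 0) as [|Hne]; [assumption|]. exfalso.
  assert (Hneg : w1 (y + c * tau) < 0) by (pose proof (w1_nonpos (y + c * tau)); lra).
  pose proof (f_decreasing_between _ (proj2 (delayed_value_bounds y Hy Hwy))) as Hf1.
  destruct (strict_min_of_pos_second_derivative w1 w2 y _ w1_deriv
              (w2_derivative_at_critical y Hy) (w2_zero_at_critical y Hy)) as [h [Hh Hlt]].
  - assert (0 < - f1 (w (y + c * tau)) * - w1 (y + c * tau)) by (apply Rmult_lt_0_compat; lra).
    nra.
  - pose proof (w1_nonpos (y + h)). lra.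
Qed.

Lemma critical_points_backward (x0 : R) : w1 x0 = 0 -> 0 < w x0 < 1 ->
  forall n : nat, w1 (x0 + INR n * (c * tau)) = 0 /\ 0 < w (x0 + INR n * (c * tau)) < 1.
Proof.
  intros Hx0 Hw. induction n as [|n [IH1 IH2]].
  - rewrite Rmult_0_l, Rplus_0_r. auto.
  - replace (x0 + INR (S n) * (c * tau)) with (x0 + INR n * (c * tau) + c * tau)
      by (rewrite S_INR; ring).
    pose proof (delayed_value_bounds _ IH1 IH2).
    split; [apply critical_point_shifts|]; auto; lra.
Qed.

Lemma no_critical_point (x0 : R) : w1 x0 <> 0.
Proof.
  intro Hx0.
  assert (Hw : 0 < w x0 < 1).
  { pose proof (w_ne_0_at_critical x0 Hx0). pose proof (w_ne_1_at_critical x0 Hx0).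
    pose proof (w_ge_0 x0). pose proof (w_le_1 x0). lra. }
  destruct (Req_dec (c * tau) 0) as [Hct|Hct].
  { exact (no_critical_point_without_delay x0 Hct Hx0 Hw). }
  destruct (w_lim_minus (1 - w0)) as [A HA]; [lra|].
  destruct (INR_archimed (- (c * tau)) (x0 - A)) as [n Hn]; [lra|].
  destruct (critical_points_backward x0 Hx0 Hw n) as [Hn1 Hn2].
  destruct (delayed_value_bounds _ Hn1 Hn2) as [_ [_ Hle]].
  specialize (HA (x0 + INR n * (c * tau) + c * tau) ltac:(lra)).
  apply Rabs_def2 in HA. lra.
Qed.

End CriticalPoints.

Theorem lemma3p2 (f f1 f2 f3 f4 : R -> R) (w0 ws tau c : R)
  (w w1 w2 : R -> R) :
  C4_bounded_derivs f f1 f2 f3 f4 ->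
  F1 f f1 -> F2 f f1 -> F3_root f f1 w0 ->
  tau >= 0 -> c <= 0 ->
  0 < ws < 1 -> f ws = 1 -> (forall v, 0 <= v < ws -> f v > 1) ->
  (forall v, ws <= v <= w0 -> f1 v < 0) ->
  solves_P f tau c w w1 w2 ->
  (forall x, w1 x <= 0) ->
  forall x, w1 x < 0.
Proof.
  intros [Hf [_ [_ [_ [_ [M HM]]]]]] [_ [Hf1 Hf1']] _ [Hw0 [Hfw0 [Hroot _]]]
    Htau Hc _ _ Hws Hf1neg [Hw [Hw1 [_ [Heq [Hlm Hlp]]]]] Hnonpos x.
  assert (Hshift : c * tau <= 0) by nra.
  assert (HM1 : forall y, Rabs (f1 y) <= M) by (intro y; apply HM).
  assert (w1 x <> 0) by (apply (no_critical_point f f1 M w0 ws tau c w w1 w2); auto).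
  pose proof (Hnonpos x). lra.
Qed.
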